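(* Let $n\geq3$, $(R,\Lambda)$ a form ring, $C'\subseteq\mathrm{center}(R)$ a subring, $C$ the subring of $R$ of all finite sums of elements $c\bar c$ and $-c\bar c$ with $c\in C'$, and assume $R$ is a Noetherian $C$-module. Let $(I,\Gamma)$ be a form ideal of $(R,\Lambda)$ and let $g'\in U_{2n}(R,\Lambda)/U_{2n}((R,\Lambda),(I,\Gamma))$ be noncentral. Then there is a maximal ideal $m$ of $C$ such that $I\cap C\subseteq m$ and $\phi_m(g')$ is noncentral in $U_{2n}(R_m,\Lambda_m)/U_{2n}((R_m,\Lambda_m),(I_m,\Gamma_m))$.
   Context: Rings are associative with $1\neq0$; $r\mapsto\bar r$ is an involution on $R$ (additive, $\overline{rs}=\bar s\bar r$, $\bar{\bar r}=r$), $\lambda\in\mathrm{center}(R)$ with $\lambda\bar\lambda=1$. A form parameter is an additive subgroup $\Lambda$ with $\{r-\lambda\bar r\}\subseteq\Lambda\subseteq\{r:r=-\lambda\bar r\}$ and $r\Lambda\bar r\subseteq\Lambda$ for all $r$. A form ideal $(I,\Gamma)$: $I$ an ideal with $\bar I=I$, $\Gamma$ an additive subgroup with $\{\xi-\lambda\bar\xi:\xi\in I\}+\langle\zeta\alpha\bar\zeta:\zeta\in I,\alpha\in\Lambda\rangle\subseteq\Gamma\subseteq I\cap\Lambda$ and $\alpha\Gamma\bar\alpha\subseteq\Gamma$ for all $\alpha\in R$. Indices $\Omega=\{1,\dots,n,-n,\dots,-1\}$; for columns $u,v$: $\mathbbm{f}(u,v)=\sum_{i=1}^n\bar u_iv_{-i}$,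 $\mathbbm{h}(u,v)=\sum_{i=1}^n(\bar u_iv_{-i}+\lambda\bar u_{-i}v_i)$. $U_{2n}(R,\Lambda)$ = all $\sigma\in GL_{2n}(R)$ with $\mathbbm{h}(\sigma u,\sigma v)=\mathbbm{h}(u,v)$ and $\mathbbm{f}(\sigma u,\sigma u)-\mathbbm{f}(u,u)\in\Lambda$ for all $u,v$; $U_{2n}((R,\Lambda),(I,\Gamma))$ = the normal subgroup of $\sigma\in U_{2n}(R,\Lambda)$ with $\sigma\equiv e\pmod I$ and $\mathbbm{f}(\sigma u,\sigma u)-\mathbbm{f}(u,u)\in\Gamma$ for all $u$. Localization: $C$ is central and fixed pointwise by the involution. For a maximal ideal $m$ of $C$, $S_m=C\setminus m$, $R_m=S_m^{-1}R$ (with involution $\overline{r/s}=\bar r/s$ and $\lambda_m$ the image of $\lambda$), $\Lambda_m=S_m^{-1}\Lambda$, $I_m=S_m^{-1}I$, $\Gamma_m=S_m^{-1}\Gamma$. $F_m:U_{2n}(R,\Lambda)\to U_{2n}(R_m,\Lambda_m)$ applies the localization map $f_m:R\to R_m$ entrywise, and $\phi_m: U_{2n}(R,\Lambda)/U_{2n}((R,\Lambda),(I,\Gamma))\to U_{2n}(R_m,\Lambda_m)/U_{2n}((R_m,\Lambda_m),(I_m,\Gamma_m))$ is the homomorphism induced by $F_m$. *)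

From mathcomp Require Import all_boot all_algebra.
Set Implicit Arguments. Unset Strict Implicit. Unset Printing Implicit Defensive.
Import GRing.Theory.
Local Open Scope ring_scope.

Section FormRings.
Variable A : nzRingType.
Variable bar : A -> A.

Definition involution : Prop :=
  (forall r s, bar (r + s) = bar r + bar s) /\
  (forall r s, bar (r * s) = bar s * bar r) /\
  (forall r, bar (bar r) = r).

Definition central (x : A) : Prop := forall y, x * y = y * x.

Definition add_subgroup (P : A -> Prop) : Prop :=
  P 0 /\ (forall x y, P x -> P y -> P (x - y)).

Variable lam : A.

Definition form_constant : Prop := central lam /\ lam * bar lam = 1.

Definition form_parameter (L : A -> Prop) : Prop :=
  add_subgroup L /\
  (forall r, L (r - lam * bar r)) /\
  (forall a, L a -> a = - (lam * bar a)) /\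
  (forall r a, L a -> L (r * a * bar r)).

Definition form_ring (L : A -> Prop) : Prop :=
  involution /\ form_constant /\ form_parameter L.

Definition ideal (I : A -> Prop) : Prop :=
  add_subgroup I /\ (forall r x, I x -> I (r * x)) /\ (forall r x, I x -> I (x * r)).

Definition form_ideal (L I G : A -> Prop) : Prop :=
  ideal I /\ (forall x, I x <-> I (bar x)) /\
  add_subgroup G /\
  (forall xi, I xi -> G (xi - lam * bar xi)) /\
  (forall zeta alpha, I zeta -> L alpha -> G (zeta * alpha * bar zeta)) /\
  (forall g, G g -> I g /\ L g) /\
  (forall alpha g, G g -> G (alpha * g * bar alpha)).

Variable n : nat.

(* indices Omega = {1,..,n,-n,..,-1}: paper index (k+1) is position lshift n k,
   paper index -(k+1) is position rshift n (rev_ord k) (i.e. 2n-(k+1)). *)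
Definition ipos (k : 'I_n) : 'I_(n + n) := lshift n k.
Definition ineg (k : 'I_n) : 'I_(n + n) := rshift n (rev_ord k).

Definition fform (u v : 'cV[A]_(n + n)) : A :=
  \sum_(k < n) bar (u (ipos k) 0) * v (ineg k) 0.

Definition hform (u v : 'cV[A]_(n + n)) : A :=
  \sum_(k < n) (bar (u (ipos k) 0) * v (ineg k) 0
                + lam * bar (u (ineg k) 0) * v (ipos k) 0).

Definition invertible_mx (s : 'M[A]_(n + n)) : Prop :=
  exists t : 'M[A]_(n + n), s *m t = 1%:M /\ t *m s = 1%:M.

Definition inU (L : A -> Prop) (s : 'M[A]_(n + n)) : Prop :=
  invertible_mx s /\
  (forall u v, hform (s *m u) (s *m v) = hform u v) /\
  (forall u, L (fform (s *m u) (s *m u) - fform u u)).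

Definition inUrel (L I G : A -> Prop) (s : 'M[A]_(n + n)) : Prop :=
  inU L s /\
  (forall i j, I (s i j - (1%:M : 'M[A]_(n + n)) i j)) /\
  (forall u, G (fform (s *m u) (s *m u) - fform u u)).

(* the class of s in U_{2n}(R,Lambda)/U_{2n}((R,Lambda),(I,Gamma)) is
   noncentral: some class tau H does not commute with s H, i.e. there is no
   rho in H with s tau = tau s rho. *)
Definition noncentral_mod (L I G : A -> Prop) (s : 'M[A]_(n + n)) : Prop :=
  exists t, inU L t /\ ~ (exists rho, inUrel L I G rho /\ s *m t = t *m s *m rho).

End FormRings.

Section Central.
Variable R : nzRingType.

Definition subring (P : R -> Prop) : Prop :=
  P 1 /\ (forall x y, P x -> P y -> P (x - y)) /\ (forall x y, P x -> P y -> P (x * y)).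

Inductive sums_norms (bar : R -> R) (C' : R -> Prop) : R -> Prop :=
| SN0 : sums_norms bar C' 0
| SNadd c x : C' c -> sums_norms bar C' x -> sums_norms bar C' (c * bar c + x)
| SNsub c x : C' c -> sums_norms bar C' x -> sums_norms bar C' (x - c * bar c).

Definition C_submodule (C M : R -> Prop) : Prop :=
  add_subgroup M /\ (forall c x, C c -> M x -> M (c * x)).

Definition noetherian_module (C : R -> Prop) : Prop :=
  forall M, C_submodule C M ->
    exists gens : seq R, (forall x, x \in gens -> M x) /\
      forall x, M x -> exists cs : seq R, size cs = size gens /\
        (forall c, c \in cs -> C c) /\
        x = \sum_(i < size gens) cs`_i * gens`_i.

Definition ideal_of (C J : R -> Prop) : Prop :=
  (forall x, J x -> C x) /\ add_subgroup J /\
  (forall c x, C c -> J x -> J (c * x)).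

Definition maximal_ideal_of (C m : R -> Prop) : Prop :=
  ideal_of C m /\ ~ m 1 /\
  forall J, ideal_of C J -> (forall x, m x -> J x) ->
    (forall x, J x <-> m x) \/ (forall x, C x -> J x).

Definition compl_in (C m : R -> Prop) : R -> Prop := fun s => C s /\ ~ m s.

(* f : R -> B is (the map to) the localization S^{-1} R of R at the central
   multiplicative set S: images of S are units, every element of B is a
   fraction f r / f s, and f r = 0 iff s r = 0 for some s in S. *)
Definition is_localization (B : nzRingType) (S : R -> Prop)
    (f : {rmorphism R -> B}) : Prop :=
  (forall s, S s -> exists t, f s * t = 1 /\ t * f s = 1) /\
  (forall b, exists r s, S s /\ b * f s = f r) /\
  (forall r, f r = 0 -> exists s, S s /\ s * r = 0).

Definition loc_set (B : nzRingType) (S : R -> Prop) (f : R -> B)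
    (P : R -> Prop) : B -> Prop :=
  fun b => exists x s, P x /\ S s /\ b * f s = f x.

End Central.

(* If the class of s is noncentral, some t puts the commutator r = s^-1 t^-1 s t
   outside U((R,L),(I,G)): either an entry of r - 1 lies outside I, or a defect
   f(ru,ru) - f(u,u) lies outside G.  Call it a, and P the group (I or G) it
   avoids; P is a C-module.  The conductor {c in C | c a in P} is a proper ideal
   of C, so by Noetherianity it lies in a maximal ideal m, and then a/1 is not in
   P_m: the image of r in the localized group stays outside the relative
   subgroup, so t/1 still witnesses that s/1 is noncentral.  For c in I and C,
   c^2 a lies in P, so c^2 is in m and, m being prime, c is in m. *)

From mathcomp Require Import all_boot all_algebra.
From Stdlib Require Import Classical ClassicalEpsilon.
Import GRing.Theory.
Local Open Scope ring_scope.
Set Implicit Arguments. Unset Strict Implicit. Unset Printing Implicit Defensive.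

Section AdditiveSubgroup.
Variables (A : nzRingType) (P : A -> Prop).
Hypothesis P_add : add_subgroup P.

Lemma add_subgroupN x : P x -> P (- x).
Proof. by case: P_add => P0 PB Px; rewrite -sub0r; apply: PB. Qed.

Lemma add_subgroupD x y : P x -> P y -> P (x + y).
Proof.
by case: P_add => _ PB Px Py; rewrite -[y]opprK; apply/PB/add_subgroupN.
Qed.

End AdditiveSubgroup.

Section Involution.
Variables (A : nzRingType) (bar : A -> A).
Hypothesis bar_inv : involution bar.

Lemma barD r s : bar (r + s) = bar r + bar s.
Proof. by case: bar_inv. Qed.

Lemma barM r s : bar (r * s) = bar s * bar r.
Proof. by case: bar_inv => _ []. Qed.

Lemma barK r : bar (bar r) = r.
Proof. by case: bar_inv => _ []. Qed.

Lemma bar0 : bar 0 = 0.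
Proof. by apply: (@addIr _ (bar 0)); rewrite -barD !add0r. Qed.

Lemma barN r : bar (- r) = - bar r.
Proof. by apply: (@addIr _ (bar r)); rewrite -barD !addNr bar0. Qed.

Lemma barB r s : bar (r - s) = bar r - bar s.
Proof. by rewrite barD barN. Qed.

Lemma bar1 : bar 1 = 1.
Proof. by rewrite -[bar 1]mulr1 -{2}[1]barK -barM mulr1 barK. Qed.

Lemma central_bar c : central c -> central (bar c).
Proof. by move=> cc y; rewrite -{1}[y]barK -barM -cc barM barK. Qed.

End Involution.

Lemma centralM (A : nzRingType) (a b : A) : central a -> central b -> central (a * b).
Proof. by move=> ca cb y; rewrite -mulrA cb mulrA ca mulrA. Qed.

Lemma central_inv (A : nzRingType) (x t : A) :
  central x -> x * t = 1 -> t * x = 1 -> central t.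
Proof.
by move=> cx xt tx y; rewrite -[t * y]mulr1 -xt mulrA -(mulrA t) -cx mulrA tx mul1r.
Qed.

Section SumsOfNorms.
Variables (R : nzRingType) (bar : R -> R) (C' : R -> Prop).
Hypotheses (bar_inv : involution bar) (C'_central : forall c, C' c -> central c).
Local Notation C := (sums_norms bar C').

Lemma sums_normsD x y : C x -> C y -> C (x + y).
Proof.
elim=> [|c z C'c _ IH|c z C'c _ IH] Cy; first by rewrite add0r.
- by rewrite -addrA; apply/SNadd/IH.
- by rewrite addrAC; apply/SNsub/IH.
Qed.

Lemma sums_normsN x : C x -> C (- x).
Proof.
elim=> [|c z C'c _ IH|c z C'c _ IH]; first by rewrite oppr0; constructor.
- by rewrite opprD addrC; apply: SNsub.
- by rewrite opprB; apply: SNadd.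
Qed.

Lemma sums_normsB x y : C x -> C y -> C (x - y).
Proof. by move=> Cx Cy; apply/sums_normsD/sums_normsN. Qed.

Lemma sums_norms_add_subgroup : add_subgroup C.
Proof. by split; [constructor | exact: sums_normsB]. Qed.

Lemma central_norm c : C' c -> central (c * bar c).
Proof.
by move=> C'c; apply: centralM (C'_central C'c) (central_bar bar_inv (C'_central C'c)).
Qed.

Lemma sums_norms_central x : C x -> central x.
Proof.
elim=> [|c z C'c _ IH|c z C'c _ IH] y; first by rewrite mul0r mulr0.
- by rewrite mulrDl mulrDr central_norm // IH.
- by rewrite mulrBl mulrBr central_norm // IH.
Qed.

Lemma sums_norms_bar x : C x -> bar x = x.
Proof.
elim=> [|c z _ _ IH|c z _ _ IH]; first exact: bar0.
- by rewrite (barD bar_inv) IH (barM bar_inv) (barK bar_inv).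
- by rewrite (barB bar_inv) IH (barM bar_inv) (barK bar_inv).
Qed.

Hypothesis C'_subring : subring C'.

Lemma sums_norms1 : C 1.
Proof.
case: C'_subring => C'1 _.
by rewrite -[1]addr0 -{1}[1]mulr1 -{2}(bar1 bar_inv); apply: SNadd => //; constructor.
Qed.

Lemma sums_norms_normM c y : C' c -> C y -> C (c * bar c * y).
Proof.
case: C'_subring => _ [_ C'M] C'c.
have normM d : c * bar c * (d * bar d) = c * d * bar (c * d).
  have cc := central_bar bar_inv (C'_central C'c).
  rewrite (barM bar_inv) -!mulrA; congr (c * _).
  by rewrite cc -mulrA.
elim=> [|d z C'd _ IH|d z C'd _ IH]; first by rewrite mulr0; constructor.
- by rewrite mulrDr normM; apply: SNadd (C'M _ _ C'c C'd) IH.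
- by rewrite mulrBr normM; apply: SNsub (C'M _ _ C'c C'd) IH.
Qed.

Lemma sums_normsM x y : C x -> C y -> C (x * y).
Proof.
move=> + Cy; elim=> [|c z C'c _ IH|c z C'c _ IH]; first by rewrite mul0r; constructor.
- by rewrite mulrDl; apply/sums_normsD/IH/sums_norms_normM.
- by rewrite mulrBl; apply/sums_normsB/sums_norms_normM.
Qed.

End SumsOfNorms.

Lemma sums_norms_submodule (R : nzRingType) (bar : R -> R) (C' P : R -> Prop) :
  involution bar -> (forall c, C' c -> central c) ->
  add_subgroup P -> (forall r a, P a -> P (r * a * bar r)) ->
  C_submodule (sums_norms bar C') P.
Proof.
move=> bar_inv C'c P_add P_conj; split=> // c x; elim=> [|d z C'd _ IH|d z C'd _ IH] Px.
- by rewrite mul0r; case: P_add.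
- rewrite mulrDl -mulrA (central_bar bar_inv (C'c _ C'd)) mulrA.
  by apply: add_subgroupD => //; [apply: P_conj | apply: IH].
- rewrite mulrBl -mulrA (central_bar bar_inv (C'c _ C'd)) mulrA.
  by case: P_add => _; apply; [apply: IH | apply: P_conj].
Qed.

Lemma dependent_choice (T : Type) (P : T -> Prop) (rel : T -> T -> Prop) (x0 : T) :
  P x0 -> (forall x, P x -> exists y, P y /\ rel x y) ->
  exists u : nat -> T, forall k, P (u k) /\ rel (u k) (u k.+1).
Proof.
move=> Px0 step; pose next x := epsilon (inhabits x0) (fun y => P y /\ rel x y).
have next_spec x : P x -> P (next x) /\ rel x (next x).
  by move=> Px; exact: (epsilon_spec _ (fun y => P y /\ rel x y) (step x Px)).
have Pu k : P (iter k next x0) by elim: k => //= k /next_spec [].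
by exists (fun k => iter k next x0) => k; split=> //; case: (next_spec _ (Pu k)).
Qed.

Section NoetherianModule.
Variables (R : nzRingType) (C : R -> Prop).

Lemma C_submodule_sum (M : R -> Prop) (gens cs : seq R) :
  C_submodule C M -> size cs = size gens ->
  (forall c, c \in cs -> C c) -> (forall x, x \in gens -> M x) ->
  M (\sum_(i < size gens) cs`_i * gens`_i).
Proof.
move=> [M_add M_C] size_cs C_cs M_gens.
apply: (big_rec M); first by case: M_add.
move=> i y _ My; apply: add_subgroupD => //; apply: M_C.
  by apply/C_cs/mem_nth; rewrite size_cs.
exact/M_gens/mem_nth.
Qed.

(* The union of the chain is a submodule; its finitely many generators all
   lie in one stage of the chain, which therefore contains the whole union. *)
Lemma noetherian_chain_stationary (u : nat -> R -> Prop) :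
  noetherian_module C -> (forall k, C_submodule C (u k)) ->
  (forall k x, u k x -> u k.+1 x) ->
  exists K, forall x, u K.+1 x -> u K x.
Proof.
move=> noeth u_sub u_incr.
have u_mono k l x : (k <= l)%N -> u k x -> u l x.
  elim: l => [|l IH]; first by rewrite leqn0 => /eqP ->.
  by rewrite leq_eqVlt => /orP [/eqP -> // | /IH ukl /ukl /u_incr].
pose U x := exists k, u k x.
have U_sub : C_submodule C U.
  split; first split.
  - by exists 0%N; case: (u_sub 0%N) => [[]].
  - move=> x y [k ux] [l uy]; exists (maxn k l).
    case: (u_sub (maxn k l)) => [[_ uB] _]; apply: uB.
      exact: u_mono (leq_maxl k l) ux.
    exact: u_mono (leq_maxr k l) uy.
  - by move=> c x Cc [k ux]; exists k; case: (u_sub k) => _; apply.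
have [gens [U_gens gens_span]] := noeth U U_sub.
have [K gens_K] : exists K, forall x, x \in gens -> u K x.
  elim: gens U_gens {gens_span} => [|g gs IH] U_gens; first by exists 0%N.
  have [K1 gs_K1] := IH (fun x xgs => U_gens x (mem_behead (s := g :: gs) xgs)).
  have [K2 g_K2] := U_gens g (mem_head _ _).
  exists (maxn K1 K2) => x; rewrite in_cons => /orP [/eqP -> | xgs].
    exact: u_mono (leq_maxr K1 K2) g_K2.
  exact: u_mono (leq_maxl K1 K2) (gs_K1 x xgs).
exists K => x uKx; have [cs [size_cs [C_cs ->]]] := gens_span x (ex_intro _ K.+1 uKx).
exact: C_submodule_sum.
Qed.

Lemma not_maximal_ideal_extends J :
  ideal_of C J -> ~ J 1 -> ~ maximal_ideal_of C J ->
  exists J', (ideal_of C J' /\ ~ J' 1) /\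
    (forall x, J x -> J' x) /\ exists x, J' x /\ ~ J x.
Proof.
move=> J_id J1 J_nmax; apply: NNPP => no_ext; apply: J_nmax; do 2!split=> //.
move=> J' J'_id JJ'; apply: NNPP => /not_or_and [J'_neq J'_nfull].
apply: no_ext; exists J'; split; [split=> // J'1 | split=> //].
  apply: J'_nfull => c Cc; rewrite -[c]mulr1; case: J'_id => _ [_]; exact.
have [x x_neq] := not_all_ex_not _ _ J'_neq.
exists x; split; last by move=> Jx; apply: x_neq; split=> // _; exact: JJ'.
by apply: NNPP => J'x; apply: x_neq; split=> [/J'x [] | /JJ'].
Qed.

Lemma exists_maximal_ideal J0 :
  noetherian_module C -> ideal_of C J0 -> ~ J0 1 ->
  exists m, maximal_ideal_of C m /\ forall x, J0 x -> m x.
Proof.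
move=> noeth J0_id J01; apply: NNPP => no_max.
pose proper_over J := (ideal_of C J /\ ~ J 1) /\ forall x, J0 x -> J x.
pose strict_sub (J J' : R -> Prop) := (forall x, J x -> J' x) /\ exists x, J' x /\ ~ J x.
have step J : proper_over J -> exists J', proper_over J' /\ strict_sub J J'.
  move=> [[J_id J1] J0J].
  have [|J' [J'_prop [JJ' J'_new]]] := not_maximal_ideal_extends J_id J1.
    by move=> J_max; apply: no_max; exists J.
  by exists J'; split; [split=> // x /J0J /JJ' | split].
have [u u_chain] :=
  dependent_choice (rel := strict_sub) (conj (conj J0_id J01) (fun x h => h)) step.
have [||K uK] := noetherian_chain_stationary (u := u) noeth.
- by move=> k; case: (u_chain k) => [[[[_ uk_sub] _] _] _].
- by move=> k; have [_ []] := u_chain k.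
have [_ [_ [x [uK1x /(_ (uK x uK1x))]]]] := u_chain K; exact.
Qed.

End NoetherianModule.

Section CentralSubring.
Variables (R : nzRingType) (C : R -> Prop).
Hypotheses (C_add : add_subgroup C) (C_mul : forall x y, C x -> C y -> C (x * y))
  (C1 : C 1) (C_central : forall x, C x -> central x).

(* If a is not in m, the ideal m + C a is everything, so 1 = z + y a with z in m. *)
Lemma maximal_ideal_prime m a b :
  maximal_ideal_of C m -> C a -> C b -> m (a * b) -> ~ m a -> m b.
Proof.
move=> [[mC [m_add mC_mul]] [m1 m_max]] Ca Cb mab m'a.
pose J x := exists z y, m z /\ C y /\ x = z + y * a.
have m0 : m 0 by case: m_add.
have C0 : C 0 by case: C_add.
have J_id : ideal_of C J.
  split.
    by move=> x [z [y [mz [Cy ->]]]]; apply: add_subgroupD => //; [exact: mC | exact: C_mul].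
  split; first split.
  - by exists 0, 0; rewrite mul0r addr0.
  - move=> x x' [z [y [mz [Cy ->]]]] [z' [y' [mz' [Cy' ->]]]].
    exists (z - z'), (y - y'); split; first by case: m_add => _; apply.
    split; first by case: C_add => _; apply.
    by rewrite mulrBl opprD addrACA.
  - move=> c x Cc [z [y [mz [Cy ->]]]]; exists (c * z), (c * y).
    by split; [exact: mC_mul | split; [exact: C_mul | rewrite mulrDr mulrA]].
have mJ x : m x -> J x by exists x, 0; rewrite mul0r addr0.
case: (m_max J J_id mJ) => [J_m | J_full].
  by case: m'a; apply/J_m; exists 0, 1; rewrite mul1r add0r.
have [z [y [mz [Cy one_eq]]]] := J_full 1 C1.
have -> : b = b * z + y * (a * b).
  by rewrite mulrA -(C_central Cb (y * a)) -mulrDr -one_eq mulr1.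
by apply: add_subgroupD => //; exact: mC_mul.
Qed.

Lemma compl_in_maximal_mul m a b :
  maximal_ideal_of C m -> compl_in C m a -> compl_in C m b -> compl_in C m (a * b).
Proof.
move=> m_max [Ca m'a] [Cb m'b]; split; first exact: C_mul.
by move=> /(maximal_ideal_prime m_max Ca Cb) /(_ m'a).
Qed.

Lemma compl_in_maximal1 m : maximal_ideal_of C m -> compl_in C m 1.
Proof. by case=> _ []. Qed.

Definition conductor (P : R -> Prop) (a : R) : R -> Prop := fun c => C c /\ P (c * a).

Lemma conductor_ideal P a : C_submodule C P -> ideal_of C (conductor P a).
Proof.
move=> [P_add P_C]; split; first by move=> x [].
split; first split.
- by split; [case: C_add | rewrite mul0r; case: P_add].
- move=> x y [Cx Px] [Cy Py]; split; first by case: C_add => _; apply.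
  by rewrite mulrBl; case: P_add => _; apply.
- move=> c x Cc [Cx Px]; split; first exact: C_mul.
  by rewrite -mulrA; apply: P_C.
Qed.

Lemma conductor_loc_set (B : nzRingType) (S P : R -> Prop) (f : {rmorphism R -> B}) a :
  (forall s, S s -> C s) -> (forall s t, S s -> S t -> S (s * t)) ->
  C_submodule C P -> is_localization S f ->
  loc_set S f P (f a) -> exists s, S s /\ conductor P a s.
Proof.
move=> SC S_mul [_ P_C] [_ [_ f_ker]] [x [s [Px [Ss xs]]]].
have /f_ker [s' [Ss' s'as]] : f (a * s - x) = 0 by rewrite rmorphB rmorphM xs subrr.
exists (s' * s); split; first exact: S_mul.
split; first by apply: C_mul; apply: SC.
suff -> : s' * s * a = s' * x by apply: P_C => //; apply: SC.
by apply/eqP; rewrite -subr_eq0 -mulrA (C_central (SC _ Ss) a) -mulrBr s'as.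
Qed.

Lemma exists_maximal_ideal_loc_nmem (I P : R -> Prop) a :
  noetherian_module C -> C_submodule C P -> ~ P a ->
  (forall c, I c -> C c -> P (c * c * a)) ->
  exists m, maximal_ideal_of C m /\ (forall x, I x -> C x -> m x) /\
    forall (B : nzRingType) (f : {rmorphism R -> B}),
      is_localization (compl_in C m) f -> ~ loc_set (compl_in C m) f P (f a).
Proof.
move=> noeth P_sub P'a IP.
have cond1 : ~ conductor P a 1 by case=> _; rewrite mul1r.
have [m [m_max cond_m]] := exists_maximal_ideal noeth (conductor_ideal a P_sub) cond1.
exists m; split=> //; split.
  move=> x Ix Cx; apply: NNPP => m'x; apply/m'x/(maximal_ideal_prime m_max Cx Cx _ m'x).
  by apply: cond_m; split; [exact: C_mul | exact: IP].
move=> B f f_loc /(conductor_loc_set _ _ P_sub f_loc) [].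
- by move=> s [].
- by move=> s t; apply: compl_in_maximal_mul.
by move=> s [[_ m's] /cond_m].
Qed.

End CentralSubring.

Section UnitaryGroup.
Variables (A : nzRingType) (bar : A -> A) (lam : A) (L : A -> Prop) (n : nat).
Implicit Types (s t : 'M[A]_(n + n)) (u v : 'cV[A]_(n + n)).

Lemma inU_mul s t :
  add_subgroup L -> inU bar lam L s -> inU bar lam L t -> inU bar lam L (s *m t).
Proof.
move=> L_add [[s' [ss' s's]] [s_h s_f]] [[t' [tt' t't]] [t_h t_f]].
split; first exists (t' *m s'); first split.
- by rewrite -mulmxA (mulmxA t) tt' mul1mx ss'.
- by rewrite -mulmxA (mulmxA s') s's mul1mx t't.
split=> [u v | u]; first by rewrite -!mulmxA s_h t_h.
have split_diff (x y z : A) : x - z = (x - y) + (y - z) by rewrite addrA subrK.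
by rewrite -mulmxA (split_diff _ (fform bar (t *m u) (t *m u))); apply: add_subgroupD.
Qed.

Lemma inU_inv s s' : add_subgroup L -> inU bar lam L s ->
  s *m s' = 1%:M -> s' *m s = 1%:M -> inU bar lam L s'.
Proof.
move=> L_add [_ [s_h s_f]] ss' s's; split; first by exists s.
split=> [u v | u]; first by rewrite -(s_h (s' *m u)) !mulmxA ss' !mul1mx.
have := s_f (s' *m u); rewrite mulmxA ss' mul1mx => /(add_subgroupN L_add).
by rewrite opprB.
Qed.

Lemma noncentral_mod_commutator (I G : A -> Prop) s t s' t' :
  s' *m s = 1%:M -> t' *m t = 1%:M -> inU bar lam L t ->
  ~ inUrel bar lam L I G (s' *m t' *m (s *m t)) -> noncentral_mod bar lam L I G s.
Proof.
move=> s's t't t_U r_out; exists t; split=> // -[rho [rho_rel st_eq]]; apply: r_out.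
by rewrite st_eq !mulmxA -(mulmxA s') t't mulmx1 s's mul1mx.
Qed.

Lemma col_mul_scalarE k (v : 'cV[A]_k) (a : A) i j : (v *m a%:M) i j = v i j * a.
Proof. by rewrite !mxE big_ord1 !mxE !ord1 mulr1n. Qed.

Lemma fform_mul_scalar u v (a b : A) :
  involution bar -> fform bar (u *m a%:M) (v *m b%:M) = bar a * fform bar u v * b.
Proof.
move=> bar_inv; rewrite /fform mulr_sumr mulr_suml; apply: eq_bigr => k _.
by rewrite !col_mul_scalarE (barM bar_inv) !mulrA.
Qed.

Lemma hform_mul_scalar u v (a b : A) : involution bar -> central (bar a) ->
  hform bar lam (u *m a%:M) (v *m b%:M) = bar a * hform bar lam u v * b.
Proof.
move=> bar_inv ca; rewrite /hform mulr_sumr mulr_suml; apply: eq_bigr => k _.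
rewrite !col_mul_scalarE !(barM bar_inv) mulrDr mulrDl !mulrA.
by rewrite -(ca lam).
Qed.

End UnitaryGroup.

Section Localization.
Variables (R B : nzRingType) (bar : R -> R) (barB : B -> B).
Variables (S : R -> Prop) (f : {rmorphism R -> B}).
Hypotheses (f_loc : is_localization S f) (S1 : S 1)
  (S_mul : forall s t, S s -> S t -> S (s * t))
  (S_central : forall s, S s -> central s) (S_bar : forall s, S s -> bar s = s).
Hypotheses (barB_inv : involution barB) (f_bar : forall r, barB (f r) = f (bar r)).

Lemma fform_map k (u v : 'cV[R]_(k + k)) :
  fform barB (map_mx f u) (map_mx f v) = f (fform bar u v).
Proof. by rewrite /fform rmorph_sum; apply: eq_bigr => i _; rewrite rmorphM !mxE f_bar. Qed.

Lemma hform_map lam k (u v : 'cV[R]_(k + k)) :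
  hform barB (f lam) (map_mx f u) (map_mx f v) = f (hform bar lam u v).
Proof.
by rewrite /hform rmorph_sum; apply: eq_bigr => i _; rewrite rmorphD !rmorphM !mxE !f_bar.
Qed.

Lemma central_loc c : central c -> central (f c).
Proof.
case: f_loc => [f_unit [f_frac _]] cc y.
have [r [s [Ss ys]]] := f_frac y.
have [t [st ts]] := f_unit _ Ss.
have -> : y = f r * t by rewrite -ys -mulrA st mulr1.
have ct : f c * t = t * f c.
  by rewrite -[t * f c]mulr1 -st !mulrA -(mulrA t) -rmorphM cc rmorphM mulrA ts mul1r.
by rewrite mulrA -rmorphM cc rmorphM -!mulrA ct.
Qed.

Lemma col_common_denominator k (w : 'cV[B]_k) :
  exists s (v : 'cV[R]_k), S s /\ forall i, w i 0 * f s = f (v i 0).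
Proof.
case: f_loc => [_ [f_frac _]].
suff /(_ (enum 'I_k)) [s [v [Ss wv]]] : forall l : seq 'I_k, exists s (v : 'cV[R]_k),
    S s /\ forall i, i \in l -> w i 0 * f s = f (v i 0).
  by exists s, v; split=> // i; apply/wv/mem_enum.
elim=> [|j l [s [v [Ss wv]]]]; first by exists 1, 0.
have [r [s0 [Ss0 wjs0]]] := f_frac (w j 0).
exists (s * s0), (\col_i (if i == j then r * s else v i 0 * s0)); split; first exact: S_mul.
move=> i; rewrite in_cons mxE; case: eqP => [-> _ | _ /= il].
  by rewrite (S_central Ss s0) !rmorphM mulrA wjs0.
by rewrite !rmorphM mulrA wv.
Qed.

Lemma col_fraction k (w : 'cV[B]_k) : exists s (v : 'cV[R]_k) t,
  [/\ S s, t * f s = 1, barB t = t, central t & w = map_mx f v *m t%:M].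
Proof.
have [s [v [Ss wv]]] := col_common_denominator w.
have [t [st ts]] := proj1 f_loc _ Ss.
have fs_bar : barB (f s) = f s by rewrite f_bar S_bar.
exists s, v, t; split=> //.
- by rewrite -[barB t]mulr1 -st mulrA -fs_bar -(barM barB_inv) st (bar1 barB_inv) mul1r.
- exact: central_inv (central_loc (S_central Ss)) st ts.
by apply/matrixP => i j; rewrite col_mul_scalarE mxE !ord1 -wv -mulrA st mulr1.
Qed.

Lemma inU_localization lam L n (s : 'M[R]_(n + n)) :
  inU bar lam L s -> inU barB (f lam) (loc_set S f L) (map_mx f s).
Proof.
move=> [[s' [ss' s's]] [s_h s_f]]; split.
  by exists (map_mx f s'); rewrite -!map_mxM ss' s's map_mx1.
split=> [u v | u].
  have [_ [u' [a [_ _ a_bar a_c ->]]]] := col_fraction u.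
  have [_ [v' [b [_ _ _ _ ->]]]] := col_fraction v.
  rewrite -a_bar in a_c; rewrite !mulmxA -!map_mxM.
  by rewrite !(hform_mul_scalar _ _ _ _ barB_inv a_c) !hform_map s_h.
have [s1 [u' [a [Ss1 as1 a_bar a_c ->]]]] := col_fraction u.
rewrite !mulmxA -!map_mxM !(fform_mul_scalar _ _ _ _ barB_inv) a_bar !fform_map.
rewrite -mulrBl -mulrBr -rmorphB.
exists (fform bar (s *m u') (s *m u') - fform bar u' u'), (s1 * s1).
split; [exact: s_f | split; first exact: S_mul].
by rewrite (a_c (f _)) rmorphM -!mulrA (mulrA a (f s1)) as1 mul1r as1 mulr1.
Qed.

End Localization.

Section FormIdeal.
Variables (R : nzRingType) (bar : R -> R) (lam : R) (L C' I G : R -> Prop) (n : nat).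
Hypotheses (bar_inv : involution bar) (C'_subring : subring C')
  (C'_central : forall c, C' c -> central c).
Local Notation C := (sums_norms bar C').

Let C_add := sums_norms_add_subgroup bar C'.
Let C_mul := sums_normsM bar_inv C'_central C'_subring.
Let C1 := sums_norms1 bar_inv C'_subring.
Let C_central := sums_norms_central bar_inv C'_central.

Lemma inU_localization_maximal (B : nzRingType) (barB : B -> B) (f : {rmorphism R -> B}) m
    (s : 'M[R]_(n + n)) :
  maximal_ideal_of C m -> is_localization (compl_in C m) f ->
  involution barB -> (forall r, barB (f r) = f (bar r)) ->
  inU bar lam L s -> inU barB (f lam) (loc_set (compl_in C m) f L) (map_mx f s).
Proof.
move=> m_max f_loc barB_inv f_bar.
apply: (inU_localization f_loc _ _ _ _ barB_inv f_bar).
- exact: compl_in_maximal1.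
- by move=> a b; apply: compl_in_maximal_mul.
- by move=> x [/C_central].
- by move=> x [/(sums_norms_bar bar_inv)].
Qed.

Hypotheses (noeth : noetherian_module C) (IG_form : form_ideal bar lam L I G).

Lemma exists_maximal_ideal_loc_not_inUrel (r : 'M[R]_(n + n)) :
  inU bar lam L r -> ~ inUrel bar lam L I G r ->
  exists m, maximal_ideal_of C m /\ (forall x, I x -> C x -> m x) /\
    forall (B : nzRingType) (barB : B -> B) (f : {rmorphism R -> B}),
      is_localization (compl_in C m) f ->
      involution barB -> (forall r, barB (f r) = f (bar r)) ->
      ~ inUrel barB (f lam) (loc_set (compl_in C m) f L)
          (loc_set (compl_in C m) f I) (loc_set (compl_in C m) f G) (map_mx f r).
Proof.
move=> r_U r_out.
have [[I_add [I_mull I_mulr]] [_ [G_add [_ [G_norm [_ G_conj]]]]]] := IG_form.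
have loc_nmem := exists_maximal_ideal_loc_nmem C_add C_mul C1 C_central (I := I) noeth.
case: (classic (forall i j, I (r i j - (1%:M : 'M[R]_(n + n)) i j))) => [r_I | ].
  have [u r_u] : exists u, ~ G (fform bar (r *m u) (r *m u) - fform bar u u).
    by apply: not_all_ex_not => r_G; apply: r_out.
  have [|m [m_max [Im m_loc]]] :=
    loc_nmem _ _ (sums_norms_submodule bar_inv C'_central G_add G_conj) r_u.
    move=> c Ic Cc; have := G_norm c _ Ic (r_U.2.2 u).
    by rewrite (sums_norms_bar bar_inv Cc) -mulrA -(C_central Cc) mulrA.
  exists m; split=> //; split=> // B barB f f_loc barB_inv f_bar [_ [_ r_G]].
  apply: (m_loc B f f_loc); have := r_G (map_mx f u).
  by rewrite -map_mxM !(fform_map f_bar) rmorphB.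
move=> /not_all_ex_not [i /not_all_ex_not [j r_ij]].
have I_sub : C_submodule C I by split=> // c x _; apply: I_mull.
have [|m [m_max [Im m_loc]]] := loc_nmem _ _ I_sub r_ij.
  by move=> c Ic _; apply/I_mulr/I_mulr.
exists m; split=> //; split=> // B barB f f_loc _ _ [_ [r_I _]].
apply: (m_loc B f f_loc); have := r_I i j.
by rewrite rmorphB !mxE rmorphMn rmorph1.
Qed.

End FormIdeal.

Theorem lemma4p1 (R : nzRingType) (bar : R -> R) (lam : R)
    (L C' I G : R -> Prop) (n : nat) (s : 'M[R]_(n + n)) :
  (3 <= n)%N ->
  form_ring bar lam L ->
  subring C' -> (forall c, C' c -> central c) ->
  noetherian_module (sums_norms bar C') ->
  form_ideal bar lam L I G ->
  inU bar lam L s ->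
  noncentral_mod bar lam L I G s ->
  exists m : R -> Prop,
    maximal_ideal_of (sums_norms bar C') m /\
    (forall x, I x -> sums_norms bar C' x -> m x) /\
    forall (B : nzRingType) (barB : B -> B) (f : {rmorphism R -> B}),
      is_localization (compl_in (sums_norms bar C') m) f ->
      involution barB -> (forall r, barB (f r) = f (bar r)) ->
      noncentral_mod barB (f lam)
        (loc_set (compl_in (sums_norms bar C') m) f L)
        (loc_set (compl_in (sums_norms bar C') m) f I)
        (loc_set (compl_in (sums_norms bar C') m) f G)
        (map_mx f s).
Proof.
move=> _ [bar_inv [_ [L_add _]]] C'_subring C'_central noeth IG_form s_U [t [t_U st_nrel]].
have [[s' [ss' s's]] _] := s_U.
have [[t' [tt' t't]] _] := t_U.
pose r := s' *m t' *m (s *m t).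
have r_U : inU bar lam L r.
  have s'_U := inU_inv L_add s_U ss' s's.
  have t'_U := inU_inv L_add t_U tt' t't.
  by apply: inU_mul => //; apply: inU_mul.
have r_out : ~ inUrel bar lam L I G r.
  move=> r_rel; apply: st_nrel; exists r; split=> //.
  by rewrite /r !mulmxA -(mulmxA t s s') ss' mulmx1 tt' mul1mx.
have [m [m_max [Im m_loc]]] :=
  exists_maximal_ideal_loc_not_inUrel bar_inv C'_subring C'_central noeth IG_form r_U r_out.
exists m; split=> //; split=> // B barB f f_loc barB_inv f_bar.
apply: (noncentral_mod_commutator (t := map_mx f t) (s' := map_mx f s') (t' := map_mx f t')).
- by rewrite -map_mxM s's map_mx1.
- by rewrite -map_mxM t't map_mx1.
- exact: inU_localization_maximal t_U.
- by rewrite -!map_mxM; apply: m_loc.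
Qed.
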